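(* The two-step nilpotent Lie algebra $N$ is decomposable if and only if there are bases $\hat X$ and $\hat I$ such that the generating hypergraph $G$ is not connected.
   Context: Let $N$ be a two-step nilpotent Lie algebra over the complex numbers with a set of $q$ generators $\hat X = \{ \mathbf{x}_1, \cdots, \mathbf{x}_q \}$, and with center $I$ having a basis $\hat I = \{ \mathbf{y}_1, \cdots, \mathbf{y}_p \}$. Let $X = \mathrm{Span}\, \hat X$, so that $N = X \oplus I$, and assume $q, p \ge 2$ (so $\dim N = q+p$). The generating hypergraph $G$ of $N$ (with respect to these bases) is the bipartite hypergraph with the two vertex sets $\hat X$ and $\hat I$, where, whenever $[\mathbf{x}_i, \mathbf{x}_j] = \sum_{k=1}^p \alpha_k \mathbf{y}_k$ with not all $\alpha_k$ zero, $G$ has the multi-vertex hyper-edge $(\mathbf{x}_i, \mathbf{x}_j; \mathbf{y}_k : \alpha_k \neq 0)$. It is assumed that each $\mathbf{y}_k$ lies in at least one three-vertex hyper-edge $(\mathbf{x}_i, \mathbf{x}_j, \mathbf{y}_k)$ (achievable by a linear change of basis of $I$). *)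

From HB Require Import structures.
From mathcomp Require Import all_boot all_order all_algebra.
From mathcomp Require Import complex.
From mathcomp Require Import reals.
Set Implicit Arguments. Unset Strict Implicit. Unset Printing Implicit Defensive.
Import Order.TTheory GRing.Theory Num.Theory.
Local Open Scope ring_scope.

Section TwoStep.
Variable (F : fieldType) (V : vectType F).
Variable br : V -> V -> V.

(* Two-step nilpotent Lie bracket: bilinear, alternating, [[u,v],w] = 0.
   (Jacobi holds trivially, antisymmetry follows from alternation.) *)
Definition two_step_bracket : Prop :=
  [/\ forall (a : F) u v w, br (a *: u + v) w = a *: br u w + br v w,
      forall (a : F) u v w, br u (a *: v + w) = a *: br u v + br u w,
      forall u, br u u = 0
    & forall u v w, br (br u v) w = 0].

Definition is_ideal (A : {vspace V}) : Prop :=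
  forall a v, a \in A -> br a v \in A.

Definition decomposable : Prop :=
  exists A B : {vspace V},
    [/\ A != 0%VS, B != 0%VS, (A + B)%VS = fullv, (A :&: B)%VS = 0%VS &
        (is_ideal A /\ is_ideal B)].

Definition is_center (U : {vspace V}) : Prop :=
  forall v, v \in U <-> (forall u, br v u = 0).

Variables (q p : nat) (x : q.-tuple V) (y : p.-tuple V).

(* Vertices of the generating hypergraph: inl i = x_i, inr k = y_k. *)
Definition vertex := ('I_q + 'I_p)%type.

(* The hyper-edge (x_i, x_j; y_k : alpha_k <> 0) where
   [x_i, x_j] = sum_k alpha_k y_k. *)
Definition hedge (i j : 'I_q) : {set vertex} :=
  [set inl i; inl j] :|: [set inr k | k : 'I_p & coord y k (br x`_i x`_j) != 0].

Definition hedges : {set {set vertex}} :=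
  [set hedge ij.1 ij.2 | ij : 'I_q * 'I_q & br x`_(ij.1) x`_(ij.2) != 0].

Definition hadj : rel vertex :=
  fun u v => [exists e in hedges, (u \in e) && (v \in e)].

Definition hconnected : Prop := forall u v : vertex, connect hadj u v.

(* Standing conventions on the bases: X^ = x and I^ = y together form a basis
   of N (so N = X (+) I with X = span x), y is a basis of the center I, and
   every y_k lies in some three-vertex hyper-edge (x_i, x_j, y_k). *)
Definition admissible_bases : Prop :=
  [/\ basis_of fullv (x ++ y),
      free y,
      is_center <<y>>%VS
    & forall k : 'I_p, exists i j : 'I_q,
        br x`_i x`_j != 0 /\ hedge i j = [set inl i; inl j; inr k]].

End TwoStep.

From HB Require Import structures.
From mathcomp Require Import all_boot all_order all_algebra.
From mathcomp Require Import complex reals.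
From mathcomp Require Import zify.
Set Implicit Arguments. Unset Strict Implicit. Unset Printing Implicit Defensive.
Import Order.TTheory GRing.Theory Num.Theory.
Local Open Scope ring_scope.

(* If the hypergraph is disconnected, let P be a connected component: the basis
   vectors at the vertices of P and those outside P span two complementary
   subspaces, and both are ideals because the bracket of two basis vectors only
   involves the vertices of their common hyper-edge.
   Conversely, let N = A (+) B with ideals A and B. The center splits as
   I = (A :&: I) (+) (B :&: I), so complements of A :&: I in A and of B :&: I in
   B together give generators x lying in A or in B. Their brackets span [N, N],
   which is all of I by the three-vertex edge assumption; a basis y of I chosen
   among these brackets makes every y_k a three-vertex edge again. Now every
   basis vector lies in A or in B, every hyper-edge stays on one side (A and B
   bracket to zero), and both sides are inhabited, so the hypergraph is not
   connected. *)

Section Bracket.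
Variables (F : fieldType) (V : vectType F) (br : V -> V -> V).
Hypothesis brP : two_step_bracket br.

Lemma brDl u v w : br (u + v) w = br u w + br v w.
Proof. by case: brP => linl _ _ _; rewrite -[u]scale1r linl !scale1r. Qed.

Lemma brDr u v w : br w (u + v) = br w u + br w v.
Proof. by case: brP => _ linr _ _; rewrite -[u]scale1r linr !scale1r. Qed.

Lemma br0l w : br 0 w = 0.
Proof. by have /eqP := brDl 0 0 w; rewrite addr0 eq_sym -subr_eq0 addrK => /eqP. Qed.

Lemma br0r w : br w 0 = 0.
Proof. by have /eqP := brDr 0 0 w; rewrite addr0 eq_sym -subr_eq0 addrK => /eqP. Qed.

Lemma brZl a u w : br (a *: u) w = a *: br u w.
Proof. by case: brP => linl _ _ _; rewrite -[a *: u]addr0 linl br0l addr0. Qed.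

Lemma brZr a u w : br w (a *: u) = a *: br w u.
Proof. by case: brP => _ linr _ _; rewrite -[a *: u]addr0 linr br0r addr0. Qed.

Lemma brC u v : br u v = - br v u.
Proof.
case: brP => _ _ alt _; apply/eqP; rewrite -addr_eq0.
by have := alt (u + v); rewrite brDl !brDr !alt add0r addr0 addrC => ->.
Qed.

Lemma memv_br_span (X Y : seq V) (S : {vspace V}) u v :
    {in X & Y, forall a b, br a b \in S} -> u \in <<X>>%VS -> v \in <<Y>>%VS ->
  br u v \in S.
Proof.
move=> XYS /(coord_span (X := in_tuple X)) -> /(coord_span (X := in_tuple Y)) ->.
apply: (big_ind (fun u => br u _ \in S)) => [|u1 u2|i _].
- by rewrite br0l mem0v.
- by rewrite brDl; apply: memvD.
rewrite brZl memvZ //; apply: (big_ind (fun v => br _ v \in S)) => [|v1 v2|j _].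
- by rewrite br0r mem0v.
- by rewrite brDr; apply: memvD.
by rewrite brZr memvZ // XYS // mem_nth.
Qed.

Lemma memv_br_ideals (A B : {vspace V}) a b :
  is_ideal br A -> is_ideal br B -> a \in A -> b \in B -> br a b \in (A :&: B)%VS.
Proof. by move=> idA idB aA bB; rewrite memv_cap idA // brC memvN idB. Qed.

Lemma memv_br_center (Z : {vspace V}) : is_center br Z -> forall u v, br u v \in Z.
Proof. by case: brP => _ _ _ nil2 centerZ u v; apply/centerZ. Qed.

Lemma center_split (A B Z : {vspace V}) :
    is_center br Z -> is_ideal br A -> is_ideal br B ->
    (A + B)%VS = fullv -> (A :&: B)%VS = 0%VS ->
  Z = (A :&: Z + B :&: Z)%VS.
Proof.
move=> centerZ idA idB AB AcapB; apply/eqP; rewrite eqEsubv.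
rewrite subv_add !capvSr !andbT; apply/subvP => z zZ.
have /memv_addP[a aA [b bB zab]] : z \in (A + B)%VS by rewrite AB memvf.
have central_parts w : br a w = 0 /\ br b w = 0.
  have brab : br a w = - br b w.
    by rewrite -[br a w]subr0 -(proj1 (centerZ z) zZ w) zab brDl opprD addrA subrr add0r.
  have : br a w \in (A :&: B)%VS by rewrite memv_cap idA // brab memvN idB.
  rewrite AcapB memv0 => /eqP aw0; split=> //.
  by apply/eqP; rewrite -oppr_eq0 -brab aw0.
by rewrite zab memv_add // memv_cap ?aA ?bB; apply/centerZ => w; case: (central_parts w).
Qed.
End Bracket.

Section Spans.
Variables (F : fieldType) (V : vectType F).

Lemma basis_subseq_span (X : seq V) : exists2 Y, {subset Y <= X} & basis_of <<X>>%VS Y.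
Proof.
elim: X => [|v X [Y YX basisY]]; first by exists [::]; rewrite ?span_nil ?nil_basis.
have spanY : <<Y>>%VS = <<X>>%VS by apply: span_basis.
have [vX | vNX] := boolP (v \in <<X>>%VS).
  exists Y => [u /YX|]; first by rewrite inE orbC => ->.
  by rewrite span_cons (addv_idPr _) // -memvE.
exists (v :: Y) => [u|]; first by rewrite !inE => /orP[->|/YX ->]; rewrite ?orbT.
by rewrite /basis_of !span_cons spanY eqxx free_cons spanY vNX (basis_free basisY).
Qed.

Lemma coord_cap0_mem (A B : {vspace V}) n (y : n.-tuple V) (l : 'I_n) w :
    (A :&: B)%VS = 0%VS -> free y -> (forall i : 'I_n, y`_i \in A \/ y`_i \in B) ->
    w \in A -> w \in <<y>>%VS -> coord y l w != 0 ->
  y`_l \in A.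
Proof.
move=> AcapB freey yAB wA wy; apply: contraNT => ylNA.
pose k (i : 'I_n) := if y`_i \in A then 0 else coord y i w.
have wB : \sum_i k i *: y`_i \in B.
  rewrite memv_suml // => i _; rewrite /k.
  by case: ifP => yiA; rewrite ?scale0r ?mem0v //; case: (yAB i); rewrite ?yiA // => /memvZ.
have wAB : w - \sum_i k i *: y`_i \in A.
  rewrite {1}(coord_span wy) -sumrB memv_suml // => i _; rewrite -scalerBl /k.
  by case: ifP => yiA; rewrite ?subr0 ?subrr ?scale0r ?mem0v ?memvZ.
have : \sum_i k i *: y`_i \in (A :&: B)%VS.
  by rewrite memv_cap wB -[X in X \in A](subKr w) memvD ?memvN.
rewrite AcapB memv0 => /eqP /(freeP freey)/(_ l).
by rewrite /k (negbTE ylNA) => ->.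
Qed.
End Spans.

Section FamilySplit.
Variables (F : fieldType) (V : vectType F) (T : finType) (f : T -> V) (P : pred T).

Lemma perm_image_predC : perm_eq (image f P ++ image f (predC P)) (codom f).
Proof. by rewrite codomE -map_cat perm_map // !enumT perm_filterC. Qed.

Lemma span_image_predC : (<<image f P>> + <<image f (predC P)>>)%VS = <<codom f>>%VS.
Proof. by rewrite -span_cat; apply/eq_span/perm_mem/perm_image_predC. Qed.

Lemma capv_image_predC :
  free (codom f) -> (<<image f P>> :&: <<image f (predC P)>>)%VS = 0%VS.
Proof. by rewrite -(perm_free perm_image_predC) cat_free => /and3P[_ _ /directv_addP]. Qed.
End FamilySplit.

Section Hypergraph.
Variables (F : fieldType) (V : vectType F) (br : V -> V -> V) (q p : nat).
Variables (x : q.-tuple V) (y : p.-tuple V).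

Definition vec (w : vertex q p) : V := match w with inl i => x`_i | inr k => y`_k end.

Lemma codom_vec : codom vec = x ++ y.
Proof.
rewrite codomE enumT unlock /= map_cat -!map_comp -!enumT.
by congr (_ ++ _); rewrite -[RHS]map_tnth_enum; apply: eq_map => i /=; rewrite (tnth_nth 0).
Qed.

Lemma hedge_inl (i j : 'I_q) : inl i \in hedge br x y i j.
Proof. by rewrite !inE eqxx. Qed.

Lemma mem_hedge_inl (i j k : 'I_q) :
  ((inl k : vertex q p) \in hedge br x y i j) = (k == i) || (k == j).
Proof. by rewrite !inE !(inj_eq inl_inj); case: imsetP => [[m _ km]|_]; rewrite ?orbF. Qed.

Lemma mem_hedge_inr (i j : 'I_q) (k : 'I_p) :
  ((inr k : vertex q p) \in hedge br x y i j) = (coord y k (br x`_i x`_j) != 0).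
Proof.
apply/setUP/idP => [[|/imsetP[l]]|yk]; first by rewrite !inE.
  by rewrite inE => ykl [->].
by right; apply/imsetP; exists k; rewrite ?inE.
Qed.

Lemma hadj_hedge (i j : 'I_q) u v :
  br x`_i x`_j != 0 -> u \in hedge br x y i j -> v \in hedge br x y i j -> hadj br x y u v.
Proof.
move=> bij0 ue ve; apply/existsP; exists (hedge br x y i j); rewrite ue ve !andbT.
by apply/imsetP; exists (i, j); rewrite ?inE.
Qed.

Lemma hadj_sym : symmetric (hadj br x y).
Proof.
by move=> u v; apply/existsP/existsP => -[e /and3P[he ue ve]]; exists e; rewrite he ue ve.
Qed.

Lemma hedge_basis_vector (i j : 'I_q) (k : 'I_p) :
  free y -> br x`_i x`_j = y`_k -> hedge br x y i j = [set inl i; inl j; inr k].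
Proof.
move=> freey bij; apply/setP => -[l|l].
  by rewrite mem_hedge_inl !inE !(inj_eq inl_inj) /= orbF.
rewrite mem_hedge_inr bij coord_free // !inE /= (inj_eq inr_inj) [l == k]eq_sym.
by case: (k == l); rewrite ?oner_eq0 ?eqxx.
Qed.
End Hypergraph.

Section AdmissibleBases.
Variables (F : fieldType) (V : vectType F) (br : V -> V -> V) (q p : nat).
Variables (x : q.-tuple V) (y : p.-tuple V).
Hypotheses (brP : two_step_bracket br) (admP : admissible_bases br x y).

Local Notation vec := (vec x y).

Lemma span_vec : <<codom vec>>%VS = fullv.
Proof. by case: admP => basisxy _ _ _; rewrite codom_vec (span_basis basisxy). Qed.

Lemma free_vec : free (codom vec).
Proof. by case: admP => basisxy _ _ _; rewrite codom_vec (basis_free basisxy). Qed.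

Lemma vec_neq0 w : vec w != 0.
Proof. by apply: free_not0 free_vec _; apply: codom_f. Qed.

Lemma dim_full : \dim (fullv : {vspace V}) = (q + p)%N.
Proof.
case: admP => basisxy _ _ _.
by rewrite (size_basis (basisxy : basis_of fullv (in_tuple (x ++ y)))) size_cat !size_tuple.
Qed.

Lemma memv_br_y u v : br u v \in <<y>>%VS.
Proof. by case: admP => _ _ centery _; exact: (memv_br_center brP centery u v). Qed.

Lemma center_basis_bracket (k : 'I_p) : exists i j, y`_k \in <[br x`_i x`_j]>%VS.
Proof.
have [_ freey _ three_vertex] := admP; have [i [j [bij hij]]] := three_vertex k.
exists i, j; set b := br x`_i x`_j in bij *.
have b_eq : b = coord y k b *: y`_k.
  have bZ : b \in <<y>>%VS by apply: memv_br_y.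
  rewrite {1}(coord_span bZ) (bigD1 k) //= big1 ?addr0 // => l lk.
  have : inr l \notin hedge br x y i j by rewrite hij !inE /= (inj_eq inr_inj).
  by rewrite mem_hedge_inr negbK => /eqP ->; rewrite scale0r.
have ck : coord y k b != 0 by apply: contraNneq bij => ck0; rewrite b_eq ck0 scale0r.
by rewrite -(scalerK ck y`_k) -b_eq memvZ // memv_line.
Qed.

Lemma is_ideal_image_closed (P : pred (vertex q p)) :
  (forall u v, hadj br x y u v -> P u -> P v) -> is_ideal br <<image vec P>>.
Proof.
move=> closedP a v aP; have vN : v \in <<codom vec>>%VS by rewrite span_vec memvf.
apply: (memv_br_span brP _ aP vN) => _ _ /imageP[u Pu ->] /codomP[w ->].
have [_ _ centery _] := admP.
have y_mem (k : 'I_p) : y`_k \in <<y>>%VS by apply/memv_span/mem_nth; rewrite size_tuple.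
case: u Pu => [i|k] Pu /=; last by rewrite (proj1 (centery _) (y_mem k)) mem0v.
case: w => [j|l] /=; last by rewrite brC // (proj1 (centery _) (y_mem l)) oppr0 mem0v.
rewrite (coord_span (memv_br_y x`_i x`_j)) memv_suml // => k _.
have [->|ck] := eqVneq (coord y k (br x`_i x`_j)) 0; first by rewrite scale0r mem0v.
have bij : br x`_i x`_j != 0 by apply: contraNneq ck => ->; rewrite linear0.
apply/memvZ/memv_span/imageP; exists (inr k) => //.
by apply: closedP Pu; apply: (hadj_hedge bij); rewrite ?hedge_inl ?mem_hedge_inr.
Qed.

Lemma disconnected_decomposable : ~ hconnected br x y -> decomposable br.
Proof.
move=> disconn.
have /forallPn[u0 /forallPn[v0 u0Nv0]] :
    ~~ [forall u, [forall v, connect (hadj br x y) u v]].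
  by apply/negP => /forallP conn; apply: disconn => u v; move/forallP: (conn u).
pose P := connect (hadj br x y) u0.
have closedP u v : hadj br x y u v -> P u -> P v.
  by move=> uv Pu; apply: connect_trans Pu (connect1 uv).
have closedNP u v : hadj br x y u v -> ~~ P u -> ~~ P v.
  by move=> uv; apply: contra => Pv; apply: connect_trans Pv (connect1 _); rewrite hadj_sym.
exists <<image vec P>>%VS, <<image vec (predC P)>>%VS; split.
- apply: contraNneq (vec_neq0 u0) => P0.
  by rewrite -memv0 -P0 memv_span // image_f // inE /P connect0.
- apply: contraNneq (vec_neq0 v0) => P0.
  by rewrite -memv0 -P0 memv_span // image_f // inE.
- by rewrite span_image_predC span_vec.
- exact: capv_image_predC free_vec.
split; apply: is_ideal_image_closed => u v uv; first exact: closedP.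
by rewrite !inE; apply: closedNP.
Qed.

Lemma hedge_side (A B : {vspace V}) (i j : 'I_q) u :
    is_ideal br A -> is_ideal br B -> (A :&: B)%VS = 0%VS ->
    (forall w, vec w \in A \/ vec w \in B) ->
    br x`_i x`_j != 0 -> x`_i \in A -> u \in hedge br x y i j ->
  vec u \in A.
Proof.
move=> idA idB AcapB sides bij xiA.
have xjA : x`_j \in A.
  case: (sides (inl j)) => //= xjB; case/eqP: bij.
  by apply/eqP; rewrite -memv0 -AcapB memv_br_ideals.
case: u => [k|l]; first by rewrite mem_hedge_inl => /orP[]/eqP->.
have [_ freey _ _] := admP.
rewrite mem_hedge_inr => /(coord_cap0_mem AcapB freey (fun l => sides (inr l))); apply.
  exact: idA.
exact: memv_br_y.
Qed.

Lemma split_bases_disconnected (A B : {vspace V}) :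
    is_ideal br A -> is_ideal br B -> (A :&: B)%VS = 0%VS -> A != 0%VS -> B != 0%VS ->
    (forall w, vec w \in A \/ vec w \in B) ->
  ~ hconnected br x y.
Proof.
move=> idA idB AcapB A0 B0 sides conn.
have notA w : vec w \in B -> vec w \notin A.
  by move=> wB; apply: contra (vec_neq0 w) => wA; rewrite -memv0 -AcapB memv_cap wA wB.
have sideA u v : hadj br x y u v -> (vec u \in A) = (vec v \in A).
  move=> /existsP[_ /and3P[/imsetP[[i j] /[!inE] bij ->] ue ve]].
  suff edge_side w : w \in hedge br x y i j -> (vec w \in A) = (x`_i \in A).
    by rewrite !edge_side.
  move=> we; have [xiA | xiNA] := boolP (x`_i \in A).
    exact: hedge_side idA idB AcapB sides bij xiA we.
  have xiB : x`_i \in B by case: (sides (inl i)) xiNA => //= ->.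
  apply/negbTE/notA; apply: (hedge_side idB idA _ _ bij xiB we); first by rewrite capvC.
  by move=> w'; case: (sides w'); [right | left].
have /existsP[wA wAA] : [exists w, vec w \in A].
  apply: contraNT A0 => /existsPn noA; rewrite -subv0 -AcapB subv_cap subvv /=.
  apply: subv_trans (subvf A) _; rewrite -span_vec; apply/span_subvP => _ /codomP[w ->].
  by case: (sides w) (noA w) => // ->.
have /existsP[wB wBNA] : [exists w, vec w \notin A].
  apply: contraNT B0 => /existsPn allA; rewrite -subv0 -AcapB subv_cap subvv andbT.
  apply: subv_trans (subvf B) _; rewrite -span_vec; apply/span_subvP => _ /codomP[w ->].
  exact/negPn/allA.
have closedA : closed (hadj br x y) [pred w | vec w \in A] by move=> u v /sideA.
by move: (closed_connect closedA (conn wA wB)); rewrite !inE wAA (negbTE wBNA).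
Qed.
End AdmissibleBases.

Section Decomposition.
Variables (F : fieldType) (V : vectType F) (br : V -> V -> V) (q p : nat).
Variables (x0 : q.-tuple V) (y0 : p.-tuple V) (A B : {vspace V}).
Hypotheses (brP : two_step_bracket br) (admP : admissible_bases br x0 y0).
Hypotheses (idA : is_ideal br A) (idB : is_ideal br B).
Hypotheses (AB : (A + B)%VS = fullv) (AcapB : (A :&: B)%VS = 0%VS).

Local Notation Z := <<y0>>%VS.

Lemma centerZ : is_center br Z.
Proof. by case: admP. Qed.

Lemma dim_center : \dim Z = p.
Proof.
by case: admP => _ freey0 _ _; rewrite (size_basis (_ : basis_of Z y0)) // /basis_of eqxx.
Qed.

Definition xs := vbasis (A :\: Z) ++ vbasis (B :\: Z).

Lemma mem_xs u : u \in xs -> u \in A \/ u \in B.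
Proof. by rewrite mem_cat => /orP[] /vbasis_mem/(subvP (diffvSl _ _)); [left | right]. Qed.

Lemma full_span_xs_center : (fullv <= <<xs>> + Z)%VS.
Proof.
rewrite span_cat !(span_basis (vbasisP _)) -AB subv_add.
by apply/andP; split;
  rewrite -[X in (X <= _)%VS](addv_diff_cap _ Z) addvS ?capvSr ?addvSl ?addvSr.
Qed.

Lemma size_xs : size xs = q.
Proof.
have dimA := dimv_cap_compl A Z; have dimB := dimv_cap_compl B Z.
have dimAB := dimv_sum_cap A B; rewrite AB AcapB dimv0 (dim_full admP) in dimAB.
have dimZ : \dim Z = (\dim (A :&: Z) + \dim (B :&: Z))%N.
  have capZ0 : (A :&: Z :&: (B :&: Z))%VS = 0%VS.
    by apply/eqP; rewrite -subv0 -AcapB capvS ?capvSl.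
  have := dimv_sum_cap (A :&: Z) (B :&: Z).
  by rewrite -(center_split brP centerZ idA idB AB AcapB) capZ0 dimv0 addn0.
rewrite dim_center in dimZ; rewrite size_cat !size_tuple; lia.
Qed.

Definition brackets := [seq br u v | u <- xs, v <- xs].

Lemma memv_br_brackets u v : br u v \in <<brackets>>%VS.
Proof.
have /memv_addP[u1 u1X [z1 z1Z ->]] := subvP full_span_xs_center u (memvf u).
have /memv_addP[v1 v1X [z2 z2Z ->]] := subvP full_span_xs_center v (memvf v).
have [central _] := centerZ z1; have [central' _] := centerZ z2.
rewrite brDl // brDr // (central z1Z) [br u1 z2]brC // (central' z2Z) oppr0 !addr0.
by apply: (memv_br_span brP _ u1X v1X) => a b aX bX; apply/memv_span/allpairs_f.
Qed.

Lemma span_brackets : <<brackets>>%VS = Z.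
Proof.
apply/eqP; rewrite eqEsubv; apply/andP; split.
  by apply/span_subvP => _ /allpairsP[[a b] [_ _ ->]]; exact: (memv_br_center brP centerZ a b).
apply/span_subvP => _ /tnthP[k ->]; rewrite (tnth_nth 0).
have [i [j ykb]] := center_basis_bracket brP admP k.
by apply: subvP ykb; rewrite -memvE memv_br_brackets.
Qed.

Lemma decomposition_split_bases : exists (x : q.-tuple V) (y : p.-tuple V),
  admissible_bases br x y /\ forall w, vec x y w \in A \/ vec x y w \in B.
Proof.
have [ys ys_brackets] := basis_subseq_span brackets; rewrite span_brackets => basis_ys.
have span_ys := span_basis basis_ys.
have size_ys : size ys == p.
  by rewrite -dim_center (size_basis (basis_ys : basis_of Z (in_tuple ys))).
have size_xs' : size xs == q by rewrite size_xs.
pose x := Tuple size_xs'; pose y := Tuple size_ys.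
have y_bracket (k : 'I_p) : exists i j : 'I_q, y`_k = br x`_i x`_j.
  have /ys_brackets/allpairsP[[a b] [/= aX bX ->]] : y`_k \in ys.
    by apply/mem_nth; rewrite size_tuple.
  have /tnthP[i ->] : a \in x := aX; have /tnthP[j ->] : b \in x := bX.
  by exists i, j; rewrite !(tnth_nth 0).
exists x, y; split.
  split.
  - rewrite basisEdim span_cat span_ys full_span_xs_center.
    by rewrite size_cat !size_tuple (dim_full admP) leqnn.
  - exact: basis_free basis_ys.
  - by rewrite span_ys; apply: centerZ.
  move=> k; have [i [j ykb]] := y_bracket k; exists i, j.
  have freey : free y := basis_free basis_ys.
  rewrite -ykb (free_not0 freey) ?mem_nth ?size_tuple //.
  by split=> //; apply: hedge_basis_vector.
have x_side (i : 'I_q) : x`_i \in A \/ x`_i \in B.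
  by apply: mem_xs; apply: mem_nth; rewrite size_xs.
case=> [i|k] /=; first exact: x_side.
have [i [j ->]] := y_bracket k.
by case: (x_side i) => [xiA | xiB]; [left; apply: idA | right; apply: idB].
Qed.
End Decomposition.

Theorem proposition3 (R : realType) (V : vectType R[i]) (br : V -> V -> V)
    (q p : nat) :
  (2 <= q)%N -> (2 <= p)%N ->
  two_step_bracket br ->
  (exists (x : q.-tuple V) (y : p.-tuple V), admissible_bases br x y) ->
  decomposable br <->
  exists (x : q.-tuple V) (y : p.-tuple V),
    admissible_bases br x y /\ ~ hconnected br x y.
Proof.
move=> _ _ brP [x0 [y0 admP]]; split.
  move=> [A [B [A0 B0 AB AcapB [idA idB]]]].
  have [x [y [admxy sides]]] := decomposition_split_bases brP admP idA idB AB AcapB.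
  exists x, y; split=> //.
  exact: (split_bases_disconnected brP admxy idA idB AcapB A0 B0 sides).
by move=> [x [y [admxy disconn]]]; exact: (disconnected_decomposable brP admxy disconn).
Qed.
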